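(* Let $\{a_i,b_i\}$, $i\in\mathbb N_+$, be pairwise distinct two-element subsets of $U$, and let $\mathcal D_1$ be the edge-independent unbounded probabilistic graph in which $E(a_i,b_i)$ and $E(b_i,a_i)$ have marginal probability $p_{a_i,b_i}=p_{b_i,a_i}=1/i^4$ for each $i\in\mathbb N_+$ and all other facts have marginal probability $0$. Then $\mathcal D_1\in\mathsf{CQ}(\mathsf{TI})$.
   Context: Fix a countably infinite universe $U$ equipped with a linear order $<$. Facts are $R(u_1,\dots,u_{\mathrm{ar}(R)})$ with $R$ from a finite schema and $u_i\in U$; instances are finite sets of facts; $\mathrm{adom}(D)$ is the set of elements of $U$ occurring in $D$. A probabilistic database (PDB) is a discrete probability space $(\mathbb D,P)$ with $\mathbb D$ a nonempty countable set of instances; its possible worlds are the instances of positive probability. A graph database is an instance over a single binary relation $E$; it is simple if it has no fact $E(a,a)$ and undirected if $E(a,b)\in D$ implies $E(b,a)\in D$. An edge-independent unbounded probabilistic graph is a PDB $\mathcal D$ such that: every possible world is a simple undirected graph database; for every sequence of pairwise distinct two-element subsets $\{a_1,b_1\},\dots,\{a_k,b_k\}$ of $U$, the events $E(a_i,b_i)\in D$ are independent; and for every $n$ there is a possible world with more than $n$ facts. Such a PDB is determined by the marginals $p_{a,b}=\Pr(E(a,b)\in D)$. A PDB $\mathcal I$ is tuple-independent ($\mathsf{TI}$) if for all pairwise distinct facts $f_1,\dots,f_k$, $\Pr(f_1\in I,\dots,f_k\in I)=\prod_i\Pr(f_i\in I)$. A conjunctive query is a formula built from relational atoms $R(\bar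 u)$ ($\bar u$ variables or constants) and equality atoms using only $\exists,\wedge$, evaluated under active domain semantics; a CQ-view consists of one CQ $\Phi_R(x_1,\dots,x_{\mathrm{ar}(R)})$ per output relation $R$, mapping $D$ to the instance of all $R(\bar a)$ with $\bar a$ over $\mathrm{adom}(D)\cup\mathrm{adom}(\Phi_R)$ and $D\models\Phi_R[\bar a]$. The image of a PDB under a view is the push-forward distribution; $\mathsf{CQ}(\mathsf{TI})$ is the class of images of TI-PDBs under CQ-views. *)

From HB Require Import structures.
From mathcomp Require Import all_boot all_order all_algebra.
From mathcomp Require Import finmap.
From mathcomp Require Import boolp classical_sets reals ereal esum.
Set Implicit Arguments. Unset Strict Implicit. Unset Printing Implicit Defensive.
Import Order.TTheory GRing.Theory Num.Theory.
Local Open Scope classical_set_scope.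
Local Open Scope fset_scope.
Local Open Scope ring_scope.

(* The universe U is taken to be nat (countably infinite, linearly ordered). *)

Section Schema.
Variables (sig : finType) (ar : sig -> nat).

Definition fact := {r : sig & {ffun 'I_(ar r) -> nat}}.
Definition instance := {fset fact}.

Definition mkfact (r : sig) (u : {ffun 'I_(ar r) -> nat}) : fact := existT _ r u.

Definition adom (D : instance) : set nat :=
  [set a | exists2 f : fact, f \in D & exists i, projT2 f i = a].

Variable R : realType.

Definition Pr (P : instance -> R) (E : set instance) : R :=
  fine (\esum_(D in E) (P D)%:E).

Definition is_PDB (P : instance -> R) : Prop :=
  (forall D, 0 <= P D) /\ \esum_(D in [set: instance]) (P D)%:E = 1%E.

Definition possible_world (P : instance -> R) (D : instance) : Prop := 0 < P D.

Definition is_TI (P : instance -> R) : Prop :=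
  is_PDB P /\
  forall s : seq fact, uniq s ->
    Pr P [set D | all (fun f => f \in D) s] =
    \prod_(f <- s) Pr P [set D | f \in D].

Inductive term := TVar of nat | TConst of nat.

Inductive cq :=
| CRel (r : sig) of ('I_(ar r) -> term)
| CEq of term & term
| CAnd of cq & cq
| CEx of nat & cq.

Definition term_val (nu : nat -> nat) (t : term) : nat :=
  match t with TVar v => nu v | TConst c => c end.

Definition term_consts (t : term) : seq nat :=
  match t with TVar _ => [::] | TConst c => [:: c] end.
Definition term_vars (t : term) : seq nat :=
  match t with TVar v => [:: v] | TConst _ => [::] end.

Fixpoint cq_consts (phi : cq) : seq nat :=
  match phi with
  | CRel r ts => flatten [seq term_consts (ts i) | i <- enum 'I_(ar r)]
  | CEq t1 t2 => term_consts t1 ++ term_consts t2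
  | CAnd p q => cq_consts p ++ cq_consts q
  | CEx _ p => cq_consts p
  end.

Fixpoint cq_fv (phi : cq) : seq nat :=
  match phi with
  | CRel r ts => flatten [seq term_vars (ts i) | i <- enum 'I_(ar r)]
  | CEq t1 t2 => term_vars t1 ++ term_vars t2
  | CAnd p q => cq_fv p ++ cq_fv q
  | CEx v p => [seq w <- cq_fv p | w != v]
  end.

Definition upd (nu : nat -> nat) (v a : nat) : nat -> nat :=
  fun w => if w == v then a else nu w.

Fixpoint cq_sat (D : instance) (dom : set nat) (nu : nat -> nat) (phi : cq) : Prop :=
  match phi with
  | CRel r ts => mkfact [ffun i => term_val nu (ts i)] \in D
  | CEq t1 t2 => term_val nu t1 = term_val nu t2
  | CAnd p q => cq_sat D dom nu p /\ cq_sat D dom nu q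
  | CEx v p => exists2 a, dom a & cq_sat D dom (upd nu v a) p
  end.

End Schema.


(* A CQ Phi(x_1,...,x_k): a formula together with its (distinct) free-variable
   list x_1..x_k containing all free variables of the formula. *)
Record cq_k (sig : finType) (ar : sig -> nat) (k : nat) := CQk {
  cq_body : cq ar;
  cq_head : 'I_k -> nat;
}.

Definition cq_k_wf (sig : finType) (ar : sig -> nat) k (Phi : cq_k ar k) : Prop :=
  injective (cq_head Phi) /\
  {subset cq_fv (cq_body Phi) <= [seq cq_head Phi i | i <- enum 'I_k]}.

Definition cq_view (sig : finType) (ar : sig -> nat) (sig' : finType) (ar' : sig' -> nat) :=
  forall r' : sig', cq_k ar (ar' r').

Definition cq_view_wf (sig : finType) (ar : sig -> nat) (sig' : finType) (ar' : sig' -> nat)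
  (V : cq_view ar ar') : Prop := forall r', cq_k_wf (V r').

Definition ad_dom (sig : finType) (ar : sig -> nat) k (Phi : cq_k ar k) (D : instance ar) : set nat :=
  adom D `|` [set a | a \in cq_consts (cq_body Phi)].

Definition view_image (sig : finType) (ar : sig -> nat) (sig' : finType) (ar' : sig' -> nat)
  (V : cq_view ar ar') (D : instance ar) (D' : instance ar') : Prop :=
  forall (r' : sig') (u : {ffun 'I_(ar' r') -> nat}),
    mkfact u \in D' <->
    ((forall i, ad_dom (V r') D (u i)) /\
     forall nu : nat -> nat, (forall i, nu (cq_head (V r') i) = u i) ->
       cq_sat D (ad_dom (V r') D) nu (cq_body (V r'))).

Definition image_PDB (R : realType) (sig : finType) (ar : sig -> nat) (sig' : finType) (ar' : sig' -> nat)
  (V : cq_view ar ar') (Q : instance ar -> R) : instance ar' -> R :=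
  fun D' => Pr Q [set D | view_image V D D'].

Definition in_CQ_TI (R : realType) (sig' : finType) (ar' : sig' -> nat)
  (P : instance ar' -> R) : Prop :=
  exists (sig : finType) (ar : sig -> nat) (Q : instance ar -> R) (V : cq_view ar ar'),
    is_TI Q /\ cq_view_wf V /\ forall D', P D' = image_PDB V Q D'.

Definition gsig := unit.
Definition gar : gsig -> nat := fun _ => 2.
Definition gfact := fact gar.
Definition ginstance := instance gar.

Definition Efact (a b : nat) : gfact :=
  @mkfact _ gar tt [ffun i : 'I_2 => if val i == 0%N then a else b].

Definition simple_graph (D : ginstance) : Prop := forall a, Efact a a \notin D.
Definition undirected_graph (D : ginstance) : Prop :=
  forall a b, Efact a b \in D -> Efact b a \in D.

Definition edge_indep_unbounded_graph (R : realType) (P : ginstance -> R) : Prop :=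
  is_PDB P /\
  (forall D, possible_world P D -> simple_graph D /\ undirected_graph D) /\
  (forall s : seq (nat * nat),
     all (fun e => e.1 != e.2) s ->
     uniq [seq [fset e.1; e.2] | e <- s] ->
     Pr P [set D | all (fun e => Efact e.1 e.2 \in D) s] =
     \prod_(e <- s) Pr P [set D | Efact e.1 e.2 \in D]) /\
  (forall n : nat, exists D, possible_world P D /\ (n < #|` D|)%N).

From mathcomp Require Import all_boot all_order all_algebra.
From mathcomp Require Import lra zify.
From mathcomp Require Import finmap.
From mathcomp Require Import boolp classical_sets reals ereal esum fsbigop cardinality.
Import Order.TTheory GRing.Theory Num.Theory.
Set Implicit Arguments. Unset Strict Implicit. Unset Printing Implicit Defensive.
Local Open Scope classical_set_scope.
Local Open Scope fset_scope.
Local Open Scope ring_scope.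

(* Let p_f be the marginal of the edge fact f, so p_f = i^-4 on both orientations
   of the i-th pair and 0 elsewhere.  Take the tuple-independent PDB Q in which each
   directed fact f occurs with probability sqrt p_f, and the view keeping E(x,y)
   exactly when E(x,y) and E(y,x) both hold.  In its image an undirected edge occurs
   with probability (sqrt p_f)^2 = p_f, independently of the other edges, so the image
   and D_1 agree on every inclusion probability Pr(A \subseteq D).  Inclusion-exclusion,
   together with the tightness of a discrete distribution, shows that these numbers
   determine the distribution of a random finite set.  Q exists because
   sum_i i^-2 < oo: it is the limit of the product measures on the first K pairs,
   weighted by the probability prod_(i > K) (1 - i^-2)^2 = (K / (K + 1))^2 that no
   later fact occurs. *)

Section DiscreteDistribution.
Variables (R : realType) (T : choiceType).

Definition is_distr (P : T -> R) : Prop :=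
  (forall x, 0 <= P x) /\ \esum_(x in [set: T]) (P x)%:E = 1%E.

Definition prob (P : T -> R) (E : set T) : R := fine (\esum_(x in E) (P x)%:E).

Variable P : T -> R.
Hypothesis P_distr : is_distr P.

Let P_ge0 x : 0 <= P x := P_distr.1 x.

Lemma esum_prob E : \esum_(x in E) (P x)%:E = (prob P E)%:E.
Proof.
have esum_ge0 : (0 <= \esum_(x in E) (P x)%:E)%E.
  by apply: esum_ge0 => x _; rewrite lee_fin.
have esum_le1 : (\esum_(x in E) (P x)%:E <= 1)%E.
  rewrite esum_mkcond -P_distr.2; apply: le_esum => x _.
  by case: ifP; rewrite // lee_fin.
rewrite /prob fineK // ge0_fin_numE //.
by apply: le_lt_trans esum_le1 _; rewrite ltry.
Qed.

Lemma prob_ge0 E : 0 <= prob P E.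
Proof. by rewrite -lee_fin -esum_prob; apply: esum_ge0 => x _; rewrite lee_fin. Qed.

Lemma probID E F : prob P E = prob P (E `&` F)%classic + prob P (E `&` ~` F)%classic.
Proof.
by apply: EFin_inj; rewrite EFinD -!esum_prob; apply: esumID => x _; rewrite lee_fin.
Qed.

Lemma le_prob E F : (E `<=` F)%classic -> prob P E <= prob P F.
Proof. by move=> EF; rewrite (probID F E) (setIidr EF) lerDl prob_ge0. Qed.

Lemma prob_setT : prob P [set: T] = 1.
Proof. by rewrite /prob P_distr.2. Qed.

Lemma prob_le1 E : prob P E <= 1.
Proof. by rewrite -prob_setT le_prob. Qed.

Lemma probC E : prob P (~` E) = 1 - prob P E.
Proof. by rewrite -prob_setT (probID setT E) !setTI addrAC subrr add0r. Qed.

Lemma prob_set1 x : prob P [set x] = P x.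
Proof. by rewrite /prob esum_set1 // lee_fin. Qed.

Lemma eq_prob_supp E F : (forall x, P x != 0 -> E x <-> F x) -> prob P E = prob P F.
Proof.
move=> EF; rewrite /prob esum_mkcond [in RHS]esum_mkcond; congr fine.
apply: eq_esum => x _; have [-> | /EF [EF1 FE1]] := eqVneq (P x) 0.
  by case: ifP; case: ifP.
case: ifPn => [/set_mem/EF1/mem_set -> // | xE].
by case: ifPn => // /set_mem/FE1/mem_set; rewrite (negPf xE).
Qed.

Lemma prob_compl_finite e : 0 < e -> exists2 X : set T, finite_set X & prob P (~` X) <= e.
Proof.
move=> e0; have : ((1 - e)%:E < \esum_(x in [set: T]) (P x)%:E)%E.
  by rewrite P_distr.2 lte_fin gtrBl.
move=> /ereal_sup_gt [_ [X [finX _]] <-] lt1e; exists X => //.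
rewrite probC lerBlDr -lerBlDl -lee_fin -esum_prob.
apply: (le_trans (ltW lt1e)); apply: esum_ge; exists X => //; exact: fsets_self.
Qed.

End DiscreteDistribution.

(** * Inclusion probabilities determine a distribution *)

Section InclusionProbabilities.
Variables (R : realType) (T : choiceType).
Implicit Types (P : {fset T} -> R) (phi : {fset T} -> {fset T}) (A B : {fset T}).

Definition contains_avoids phi A B : set {fset T} :=
  [set D | (A `<=` phi D) && [disjoint B & phi D]%fset].

Lemma contains_avoids0 phi A : contains_avoids phi A fset0 = [set D | A `<=` phi D].
Proof. by apply/funext => D; rewrite /contains_avoids /= fdisjoint0X andbT. Qed.

Lemma prob_contains_avoidsU1 P phi A B x : is_distr P ->
  prob P (contains_avoids phi A (x |` B)) =
  prob P (contains_avoids phi A B) - prob P (contains_avoids phi (x |` A) B).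
Proof.
move=> P_distr; rewrite (probID P_distr (contains_avoids phi A B) [set D | x \in phi D]).
have -> : (contains_avoids phi A B `&` [set D | x \in phi D])%classic =
          contains_avoids phi (x |` A) B.
  apply/funext => D; apply/propext; rewrite /contains_avoids /= fsubUset fsub1set.
  by case: (x \in phi D); case: (A `<=` phi D); split => // -[].
have -> : (contains_avoids phi A B `&` ~` [set D | x \in phi D])%classic =
          contains_avoids phi A (x |` B).
  apply/funext => D; apply/propext; rewrite /contains_avoids /= fdisjointU1X.
  by case: (x \in phi D); case: (A `<=` phi D); split => // -[].
by rewrite addrAC subrr add0r.
Qed.

Lemma eq_prob_contains_avoids P1 P2 phi1 phi2 : is_distr P1 -> is_distr P2 ->
  (forall A, prob P1 [set D | A `<=` phi1 D] =
             prob P2 [set D | A `<=` phi2 D]) ->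
  forall A B, prob P1 (contains_avoids phi1 A B) = prob P2 (contains_avoids phi2 A B).
Proof.
move=> P1_distr P2_distr incl A B; elim/fset1U_rect: B A => [|x B _ IH] A.
  by rewrite !contains_avoids0.
by rewrite !prob_contains_avoidsU1 // !IH.
Qed.

Lemma le_prob_image P1 P2 phi1 phi2 : is_distr P1 -> is_distr P2 ->
  (forall A B, prob P1 (contains_avoids phi1 A B) = prob P2 (contains_avoids phi2 A B)) ->
  forall D', prob P1 [set D | phi1 D = D'] <= prob P2 [set D | phi2 D = D'].
Proof.
move=> P1_distr P2_distr ca_eq D'; apply/ler_addgt0Pr => e e_gt0.
(* Up to mass e, [phi2] maps into a finite set F of facts, and on such worlds
   containing D' while avoiding F `\` D' forces [phi2 D = D']. *)
have [X finX small_compl] := prob_compl_finite P2_distr e_gt0.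
pose F := \bigcup_(D <- fset_set X) phi2 D.
have phi2_subF D : X D -> phi2 D `<=` F.
  by move=> XD; apply: bigfcup_sup => //; rewrite in_fset_set // inE.
apply: (@le_trans _ _ (prob P1 (contains_avoids phi1 D' (F `\` D')))).
  apply: le_prob => // D /= phi1D; rewrite /contains_avoids /= phi1D fsubset_refl /=.
  by apply/fdisjointP => f; rewrite inE => /andP[].
rewrite ca_eq (probID P2_distr _ X); apply: lerD; last first.
  by apply: le_trans small_compl; apply: le_prob => // D [].
apply: le_prob => // D [/= /andP[D'_sub disj] /phi2_subF phi2_sub]; apply/eqP.
rewrite eqEfsubset D'_sub andbT; apply/fsubsetP => f f_phi2.
apply: contraTT (fsubsetP phi2_sub f f_phi2) => f_D'.
by move/fdisjointP: disj => /(_ f); rewrite !inE f_D' f_phi2 => /implyP.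
Qed.

Theorem eq_prob_image_of_fsubset P1 P2 phi1 phi2 : is_distr P1 -> is_distr P2 ->
  (forall A, prob P1 [set D | A `<=` phi1 D] =
             prob P2 [set D | A `<=` phi2 D]) ->
  forall D', prob P1 [set D | phi1 D = D'] = prob P2 [set D | phi2 D = D'].
Proof.
move=> P1_distr P2_distr incl D'; have ca_eq := eq_prob_contains_avoids P1_distr P2_distr incl.
apply/eqP; rewrite eq_le (le_prob_image P1_distr P2_distr ca_eq).
by rewrite (le_prob_image P2_distr P1_distr) // => A B; rewrite ca_eq.
Qed.

End InclusionProbabilities.

(** * Tuple-independent limits of product measures *)

Lemma big_fpowersetU1 (R : Type) (idx : R) (op : Monoid.com_law idx) (T : choiceType)
    x (A : {fset T}) (P : pred {fset T}) (F : {fset T} -> R) : x \notin A ->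
  \big[op/idx]_(D <- fpowerset (x |` A) | P D) F D =
  op (\big[op/idx]_(D <- fpowerset A | P D) F D)
     (\big[op/idx]_(D <- fpowerset A | P (x |` D)) F (x |` D)).
Proof.
move=> xA; rewrite (big_fsetIDcond op [pred D | D \in fpowerset A]); congr (op _ _).
  apply: eq_fbigl_cond => D; rewrite !inE /= !fpowersetE.
  have [DA|] := boolP (D `<=` A); last by rewrite andbF.
  by rewrite (fsubset_trans DA (fsubsetU1 x A)).
have -> : [fset D in fpowerset (x |` A) | D \notin fpowerset A] =
          [fset (x |` D) | D in fpowerset A].
  apply/fsetP => D; rewrite !inE /= !fpowersetE; apply/andP/imfsetP => /=.
    move=> [DxA DA]; exists (D `\ x); first by rewrite fpowersetE fsubDset.
    rewrite fsetD1K //; apply: contraNT DA => xD.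
    have /fsetDidPl <- : [disjoint D & [fset x]] by rewrite fdisjointX1.
    by rewrite fsubDset.
  move=> [E]; rewrite fpowersetE => EA ->; rewrite fsetUS //.
  by split=> //; apply: contra xA => /fsubsetP; apply; rewrite fsetU11.
rewrite [LHS]big_mkcond big_imfset /= -?big_mkcond // => D E.
rewrite !fpowersetE => DA EA DxE.
have xD : x \notin D by apply: contra xA; apply: fsubsetP.
have xE : x \notin E by apply: contra xA; apply: fsubsetP.
by rewrite -(fsetU1K xD) DxE fsetU1K.
Qed.

Section ProductWeight.
Variables (R : comPzRingType) (T : choiceType) (q : T -> R).
Implicit Types (A D S : {fset T}).

Definition weight A D : R := \prod_(f <- A) (if f \in D then q f else 1 - q f).

Lemma weightU1_notin x A D : x \notin A -> x \notin D ->
  weight (x |` A) D = (1 - q x) * weight A D.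
Proof. by move=> xA xD; rewrite /weight big_fsetU1 // (negPf xD). Qed.

Lemma weightU1_in x A D : x \notin A -> weight (x |` A) (x |` D) = q x * weight A D.
Proof.
move=> xA; rewrite /weight big_fsetU1 // fsetU11; congr (_ * _).
apply: eq_big_seq => f fA; rewrite !inE; case: eqP => // fx.
by move: xA; rewrite -fx fA.
Qed.

Lemma prod_mem_fsetU1 x A S : x \notin S ->
  \prod_(f <- S) (if f \in x |` A then q f else 0) =
  \prod_(f <- S) (if f \in A then q f else 0).
Proof.
move=> xS; apply: eq_big_seq => f fS; rewrite !inE; case: eqP => // fx.
by move: xS; rewrite -fx fS.
Qed.

Lemma sum_weight_fsubset A S :
  \sum_(D <- fpowerset A | S `<=` D) weight A D =
  \prod_(f <- S) (if f \in A then q f else 0).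
Proof.
elim/fset1U_rect: A S => [|x A xA IH] S.
  rewrite fpowerset0 big_mkcond big_seq_fset1 fsubset0 /weight big_seq_fset0.
  have [-> | /fset0Pn [y yS]] := eqVneq S fset0; first by rewrite big_seq_fset0.
  by rewrite (big_fsetD1 y) //= mul0r.
rewrite (big_fpowersetU1 _ (fsubset S)) //=.
have weight_sub D : D \in fpowerset A -> weight (x |` A) D = (1 - q x) * weight A D.
  rewrite fpowersetE => /fsubsetP DA; apply: weightU1_notin => //.
  by apply: contra xA => /DA.
rewrite (eq_fbigr _ (fun D DA _ => weight_sub D DA)).
rewrite (eq_fbigr _ (fun D _ _ => weightU1_in D xA)) -!big_distrr /=.
rewrite [X in _ + _ * X](eq_bigl (fun D => S `\ x `<=` D)); last first.
  by move=> D; rewrite fsubDset.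
rewrite !IH; have [xS | xS] := boolP (x \in S).
  rewrite [X in _ * X](big_fsetD1 x) //= (negPf xA) mul0r mulr0 add0r.
  by rewrite (big_fsetD1 x xS) /= fsetU11 prod_mem_fsetU1 // !inE eqxx.
have /fsetDidPl -> : [disjoint S & [fset x]] by rewrite fdisjointX1.
by rewrite prod_mem_fsetU1 // -mulrDl subrK mul1r.
Qed.

End ProductWeight.

Lemma ex_common_bound (A : eqType) (s : seq A) (p : A -> nat -> Prop) :
  (forall x K M, (K <= M)%N -> p x K -> p x M) ->
  {in s, forall x, exists K, p x K} -> exists K, {in s, forall x, p x K}.
Proof.
move=> p_homo; elim: s => [|y s IH] ex_p; first by exists 0%N.
have [K1 pK1] := ex_p y (mem_head _ _).
have [K2 pK2] : exists K, {in s, forall x, p x K}.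
  by apply: IH => x xs; apply: ex_p; rewrite inE xs orbT.
exists (maxn K1 K2) => x; rewrite inE => /predU1P [-> | xs].
  exact: p_homo (leq_maxl _ _) pK1.
exact: p_homo (leq_maxr _ _) (pK2 _ xs).
Qed.

Lemma ler_sum_supp (R : numDomainType) (I : choiceType) (A B : {fset I})
    (P : pred I) (g : I -> R) :
  (forall x, 0 <= g x) -> (forall x, x \in A -> g x != 0 -> (x \in B) && P x) ->
  \sum_(x <- A) g x <= \sum_(x <- B | P x) g x.
Proof.
move=> g_ge0 suppA; rewrite [X in _ <= X]big_fset_condE; set C := [fset x in B | P x].
rewrite -(big_fset_incl _ (fsubsetIl A C)) => [|x xA]; last first.
  by rewrite !inE xA /=; apply: contraNeq => /(suppA _ xA).
rewrite [X in _ <= X](big_fsetID _ (fun x => x \in A)) /=.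
rewrite [X in _ <= X + _](eq_fbigl _ (B := A `&` C)) ?lerDl ?sumr_ge0 // => x.
by rewrite !inE andbC.
Qed.

Section LimitDistribution.
Variables (R : realType) (T : choiceType) (q : T -> R).
Variables (L : nat -> {fset T}) (tail : nat -> R).
Hypothesis q_ge0 : forall f, 0 <= q f.
Hypothesis q_le1 : forall f, q f <= 1.
Hypothesis L_homo : {homo L : K M / (K <= M)%N >-> K `<=` M}.
Hypothesis q_supp : forall f, q f != 0 -> exists K, f \in L K.
Hypothesis tail_ge0 : forall K, 0 <= tail K.
Hypothesis tail_le1 : forall K, tail K <= 1.
(* [tail K] plays the role of the probability that no fact outside [L K] occurs,
   so [limit_mass] is the product measure read off any level containing the world. *)
Hypothesis tail_step :
  forall K, tail K = tail K.+1 * \prod_(f <- L K.+1 `\` L K) (1 - q f).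
Hypothesis tail_approx1 : forall e, 0 < e -> exists K, 1 - e <= tail K.

Definition level (D : {fset T}) : nat := xget 0%N [set K | D `<=` L K].

Definition limit_mass (D : {fset T}) : R :=
  if D `<=` L (level D) then weight q (L (level D)) D * tail (level D) else 0.

Lemma weight_ge0 A D : 0 <= weight q A D.
Proof.
by apply: prodr_ge0 => f _; case: ifP => _; rewrite ?subr_ge0.
Qed.

Lemma limit_mass_ge0 D : 0 <= limit_mass D.
Proof. by rewrite /limit_mass; case: ifP => _; rewrite ?mulr_ge0 ?weight_ge0. Qed.

Lemma tail_homo : {homo tail : K M / (K <= M)%N >-> K <= M}.
Proof.
apply: homo_leq => [x|y x z|K]; [exact: lexx | exact: le_trans |].
rewrite [X in X <= _]tail_step ler_piMr // prodr_ile1 // => f _.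
by rewrite subr_ge0 q_le1 lerBlDr lerDl q_ge0.
Qed.

Lemma weight_levelS D K : D `<=` L K ->
  weight q (L K.+1) D = weight q (L K) D * \prod_(f <- L K.+1 `\` L K) (1 - q f).
Proof.
move=> /fsubsetP DK; rewrite /weight (big_fsetID _ (fun f => f \in L K)) /=.
congr (_ * _); apply: eq_fbig => [f | f]; rewrite !inE //=.
- apply/andP/idP => [[] // | fK]; split => //.
  exact: (fsubsetP (L_homo (leqnSn K))).
- by rewrite andbC.
by move=> /andP [_ fK]; case: ifP => // /DK; rewrite (negPf fK).
Qed.

Lemma level_mass_stable D K M : D `<=` L K -> (K <= M)%N ->
  weight q (L M) D * tail M = weight q (L K) D * tail K.
Proof.
move=> DK /subnK <-; elim: (M - K)%N => // n IH.
have DKn : D `<=` L (n + K) by apply: fsubset_trans DK (L_homo (leq_addl _ _)).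
by rewrite addSn weight_levelS // -IH [in RHS]tail_step mulrA [RHS]mulrAC.
Qed.

Lemma limit_massE D K : D `<=` L K -> limit_mass D = weight q (L K) D * tail K.
Proof.
move=> DK; have D_level : D `<=` L (level D) := @xgetI _ 0%N [set K | D `<=` L K] K DK.
rewrite /limit_mass D_level -(level_mass_stable D_level (leq_maxl _ K)).
exact: level_mass_stable DK (leq_maxr _ _).
Qed.

Lemma limit_mass_supp D : limit_mass D != 0 -> exists K, D `<=` L K.
Proof. by rewrite /limit_mass; case: ifP => [DL _ | _]; [exists (level D) | rewrite eqxx]. Qed.

Lemma sum_limit_mass_fsubset K S :
  \sum_(D <- fpowerset (L K) | S `<=` D) limit_mass D =
  (\prod_(f <- S) (if f \in L K then q f else 0)) * tail K.
Proof.
rewrite -sum_weight_fsubset big_distrl /=; apply: eq_fbigr => D.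
by rewrite fpowersetE => DK _; apply: limit_massE.
Qed.

Lemma prod_level_supp (S : {fset T}) : exists K0, forall K, (K0 <= K)%N ->
  \prod_(f <- S) (if f \in L K then q f else 0) = \prod_(f <- S) q f.
Proof.
have [K0 suppK0] : exists K0, {in S, forall f, q f != 0 -> f \in L K0}.
  apply: ex_common_bound => [f K M KM fK /fK | f _].
    exact: (fsubsetP (L_homo KM)).
  have [_ | /q_supp [K fK]] := eqVneq (q f) 0; last by exists K.
  by exists 0%N.
exists K0 => K K0K; apply: eq_big_seq => f fS; case: ifP => // fK.
apply/esym/eqP; apply: contraFT fK => /(suppK0 f fS).
exact: (fsubsetP (L_homo K0K)).
Qed.

Lemma esum_limit_mass_fsubset S :
  \esum_(D in [set D | S `<=` D]) (limit_mass D)%:E = (\prod_(f <- S) q f)%:E.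
Proof.
set c := \prod_(f <- S) q f.
have c_ge0 : 0 <= c by apply: prodr_ge0 => f _; apply: q_ge0.
have c_le1 : c <= 1 by apply: prodr_ile1 => f _; rewrite q_ge0 q_le1.
apply/eqP; rewrite eq_le; apply/andP; split.
  apply: ge_ereal_sup => _ [X [finX XS] <-]; rewrite fsbig_finite //= sumEFin lee_fin.
  have [K suppK] : exists K, {in fset_set X, forall D, limit_mass D != 0 -> D `<=` L K}.
    apply: ex_common_bound => [D K M KM DK /DK DK' | D _].
      exact: fsubset_trans DK' (L_homo KM).
    have [_ | /limit_mass_supp [K DK]] := eqVneq (limit_mass D) 0; last by exists K.
    by exists 0%N.
  apply: le_trans (ler_sum_supp (B := fpowerset (L K)) (P := fsubset S) _ _) _.
  - exact: limit_mass_ge0.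
  - move=> D DX mD; rewrite fpowersetE suppK //=.
    by move: DX; rewrite in_fset_set // inE => /XS.
  rewrite sum_limit_mass_fsubset; apply: le_trans (ler_piMr _ (tail_le1 K)) _.
    by apply: prodr_ge0 => f _; case: ifP => _; rewrite ?q_ge0 ?lexx.
  by apply: ler_prod => f _; case: ifP => _; rewrite ?q_ge0 lexx ?q_ge0.
apply/lee_addgt0Pr => e e_gt0.
have [K1 tailK1] := tail_approx1 e_gt0; have [K2 prodK2] := prod_level_supp S.
pose K := maxn K1 K2; have tailK := le_trans tailK1 (tail_homo (leq_maxl K1 K2)).
apply: (@le_trans _ _ ((c * tail K)%:E + e%:E)).
  by rewrite -EFinD lee_fin; nra.
apply: leeD2r; rewrite /c -(prodK2 K (leq_maxr _ _)) -sum_limit_mass_fsubset.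
apply: esum_ge; exists [set` [fset D in fpowerset (L K) | S `<=` D]].
  by split => [|D /=]; [exact: finite_fset | rewrite !inE => /andP[]].
by rewrite -fsbig_seq ?fset_uniq // -sumEFin [X in (X <= _)%E]big_fset_condE.
Qed.

Lemma limit_mass_distr : is_distr limit_mass.
Proof.
split; first exact: limit_mass_ge0.
have -> : [set: {fset T}] = [set D | fset0 `<=` D].
  by apply/seteqP; split => D; rewrite /= fsub0set.
by rewrite esum_limit_mass_fsubset big_seq_fset0.
Qed.

Lemma prob_limit_mass_fsubset S :
  prob limit_mass [set D | S `<=` D] = \prod_(f <- S) q f.
Proof. by rewrite /prob esum_limit_mass_fsubset. Qed.

Lemma prob_limit_mass_mem f : prob limit_mass [set D | f \in D] = q f.
Proof.
have -> : [set D | f \in D] = [set D | [fset f] `<=` D].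
  by apply/seteqP; split => D; rewrite /= fsub1set.
by rewrite prob_limit_mass_fsubset big_seq_fset1.
Qed.

Lemma prob_limit_mass_all s : uniq s ->
  prob limit_mass [set D | all (fun f => f \in D) s] = \prod_(f <- s) q f.
Proof.
move=> s_uniq; have -> : [set D | all (fun f => f \in D) s] = [set D | [fset f in s] `<=` D].
  apply/seteqP; split => D /=.
    by move/allP => sD; apply/fsubsetP => f; rewrite inE => /sD.
  by move/fsubsetP => sD; apply/allP => f fs; apply: sD; rewrite inE.
by rewrite prob_limit_mass_fsubset big_imfset //= undup_id.
Qed.

End LimitDistribution.

(** * Graph facts and the symmetric view *)

Lemma PrE (sig : finType) (ar : sig -> nat) (R : realType) (P : instance ar -> R) E :
  Pr P E = prob P E.
Proof. by []. Qed.

Definition esrc (f : gfact) : nat := projT2 f ord0.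
Definition etgt (f : gfact) : nat := projT2 f ord_max.

Lemma esrc_Efact u v : esrc (Efact u v) = u.
Proof. by rewrite /esrc /= ffunE. Qed.

Lemma etgt_Efact u v : etgt (Efact u v) = v.
Proof. by rewrite /etgt /= ffunE. Qed.

Lemma Efact_esrc_etgt f : Efact (esrc f) (etgt f) = f.
Proof.
case: f => [[] u]; rewrite /Efact /mkfact /esrc /etgt /=; congr existT.
by apply/ffunP => i; rewrite ffunE; case: i => [[|[|//]] i] /=; congr (u _); apply: val_inj.
Qed.

Lemma Efact_inj u v u' v' : Efact u v = Efact u' v' -> u = u' /\ v = v'.
Proof.
move=> e; split; first by rewrite -(esrc_Efact u v) e esrc_Efact.
by rewrite -(etgt_Efact u v) e etgt_Efact.
Qed.

Definition erev (f : gfact) : gfact := Efact (etgt f) (esrc f).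

Lemma erevK : involutive erev.
Proof. by move=> f; rewrite /erev esrc_Efact etgt_Efact Efact_esrc_etgt. Qed.

Lemma esrc_erev f : esrc (erev f) = etgt f.
Proof. exact: esrc_Efact. Qed.

Lemma etgt_erev f : etgt (erev f) = esrc f.
Proof. exact: etgt_Efact. Qed.

Definition sym_part (D : ginstance) : ginstance := [fset f in D | erev f \in D].

Definition sym_query : cq gar :=
  CAnd (@CRel gsig gar tt (fun i => TVar (val i)))
       (@CRel gsig gar tt (fun i => TVar (1 - val i))).

Definition sym_view : cq_view gar gar := fun r => @CQk gsig gar (gar r) sym_query val.

Lemma sym_view_wf : cq_view_wf sym_view.
Proof.
move=> r; split; first exact: val_inj.
have val_ord2 v : (v < 2)%N -> v \in [seq val i | i <- enum 'I_(gar r)].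
  by move=> v2; apply/mapP; exists (Ordinal v2); rewrite ?mem_enum.
move=> v; rewrite /= mem_cat => /orP [] /flattenP [_ /mapP [i _ ->]];
  by rewrite inE => /eqP ->; apply: val_ord2; case: i => [[|[|//]] i].
Qed.

Lemma sym_query_atoms (nu : nat -> nat) (u : {ffun 'I_2 -> nat}) :
  (forall i : 'I_2, nu i = u i) ->
  @mkfact _ gar tt [ffun i => term_val nu (TVar (val i))] = @mkfact _ gar tt u /\
  @mkfact _ gar tt [ffun i => term_val nu (TVar (1 - val i))] = erev (@mkfact _ gar tt u).
Proof.
move=> nu_u; split; first by congr existT; apply/ffunP => i; rewrite ffunE /= nu_u.
rewrite -[LHS]Efact_esrc_etgt /erev /esrc /etgt /= !ffunE /=.
by rewrite (nu_u ord_max) (nu_u ord0).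
Qed.

Lemma sym_view_sat D (u : {ffun 'I_2 -> nat}) :
  ((forall i, ad_dom (sym_view tt) D (u i)) /\
   forall nu : nat -> nat, (forall i, nu (cq_head (sym_view tt) i) = u i) ->
     cq_sat D (ad_dom (sym_view tt) D) nu (cq_body (sym_view tt)))
  <-> @mkfact _ gar tt u \in D /\ erev (@mkfact _ gar tt u) \in D.
Proof.
split=> [[_ sat] | [uD ruD]].
  pose nu w := u (inord w); have nu_u (i : 'I_2) : nu i = u i by rewrite /nu inord_val.
  have [e1 e2] := sym_query_atoms nu_u.
  by have [] := sat _ nu_u; rewrite /= e1 e2.
split=> [i | nu nu_u]; first by left; exists (@mkfact _ gar tt u) => //; exists i.
by have [e1 e2] := sym_query_atoms nu_u; rewrite /= e1 e2.
Qed.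

Lemma view_image_sym_view D D' : view_image sym_view D D' <-> D' = sym_part D.
Proof.
split=> [img | ->].
  apply/fsetP => -[[] u]; rewrite inE; apply/idP/andP.
    by move/(img tt u)/sym_view_sat.
  by move=> [uD ruD]; apply/(img tt u)/sym_view_sat.
by move=> [] u; rewrite sym_view_sat inE; split => [/andP[] // | [uD ruD]]; apply/andP.
Qed.

Lemma prob_fsubset_TI (sig : finType) (ar : sig -> nat) (R : realType)
    (Q : instance ar -> R) : is_TI Q ->
  forall B, prob Q [set D | B `<=` D] = \prod_(f <- B) prob Q [set D | f \in D].
Proof.
move=> [_ Q_TI] B; rewrite -(Q_TI _ (fset_uniq B)); congr prob.
by apply/seteqP; split => D /=; [move/fsubsetP/allP | move/allP/fsubsetP].
Qed.

Lemma fset2_sorted_inj (x0 x1 y0 y1 : nat) : (x0 < x1)%N -> (y0 < y1)%N ->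
  [fset x0; x1] = [fset y0; y1] -> x0 = y0 /\ x1 = y1.
Proof.
move=> x01 y01 e.
have : x0 \in [fset y0; y1] by rewrite -e !inE eqxx.
have : x1 \in [fset y0; y1] by rewrite -e !inE eqxx orbT.
have : y0 \in [fset x0; x1] by rewrite e !inE eqxx.
have : y1 \in [fset x0; x1] by rewrite e !inE eqxx orbT.
by rewrite !inE => /orP [] /eqP ? /orP [] /eqP ? /orP [] /eqP ? /orP [] /eqP ?; lia.
Qed.

Definition forward_edges (A : {fset gfact}) : {fset gfact} :=
  [fset f in A | (esrc f < etgt f)%N].

Definition sqrt_marginal (R : realType) (P : ginstance -> R) (f : gfact) : R :=
  Num.sqrt (prob P [set D | f \in D]).

Lemma sqrt_marginal_ge0 (R : realType) (P : ginstance -> R) f : 0 <= sqrt_marginal P f.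
Proof. exact: sqrtr_ge0. Qed.

Lemma sqrt_marginal_le1 (R : realType) (P : ginstance -> R) f :
  is_distr P -> sqrt_marginal P f <= 1.
Proof. by move=> P_distr; rewrite -sqrtr1 ler_sqrt // prob_le1. Qed.

Section EdgeIndependentGraph.
Variables (R : realType) (P : ginstance -> R).
Hypothesis P_edge_indep : edge_indep_unbounded_graph P.

Let P_distr : is_distr P := P_edge_indep.1.

Lemma possible_world_graph D : P D != 0 -> simple_graph D /\ undirected_graph D.
Proof.
move=> PD; apply: P_edge_indep.2.1.
by rewrite /possible_world lt_def PD P_distr.1.
Qed.

Lemma possible_world_erev D f : P D != 0 -> f \in D -> erev f \in D.
Proof.
by move=> /possible_world_graph [_ undir] fD; apply: undir; rewrite Efact_esrc_etgt.
Qed.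

Lemma possible_world_loopfree D f : P D != 0 -> f \in D -> esrc f != etgt f.
Proof.
move=> /possible_world_graph [simple _] fD; apply: contraNneq (simple (esrc f)) => e.
by rewrite {2}e Efact_esrc_etgt.
Qed.

Lemma prob_erev f : prob P [set D | erev f \in D] = prob P [set D | f \in D].
Proof.
apply: eq_prob_supp => // D PD /=; split; last exact: possible_world_erev.
by rewrite -{2}(erevK f); apply: possible_world_erev.
Qed.

Lemma prob_loop f : esrc f = etgt f -> prob P [set D | f \in D] = 0.
Proof.
move=> loop_f; rewrite (@eq_prob_supp _ _ P _ set0) ?/prob ?esum_set0 //.
by move=> D PD; split=> // fD; move: (possible_world_loopfree PD fD); rewrite loop_f eqxx.
Qed.

Lemma prob_fsubset_forward (B : {fset gfact}) : {in B, forall f, esrc f < etgt f}%N ->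
  prob P [set D | B `<=` D] = \prod_(f <- B) prob P [set D | f \in D].
Proof.
move=> B_fwd; have [_ [_ [indep _]]] := P_edge_indep.
have := indep [seq (esrc f, etgt f) | f <- B]; rewrite !PrE all_map big_map /=.
under eq_bigr do rewrite Efact_esrc_etgt.
have -> : [set D | all (fun e => Efact e.1 e.2 \in D) [seq (esrc f, etgt f) | f <- B]] =
          [set D | B `<=` D].
  apply/seteqP; split => D /=; rewrite all_map; under eq_all do rewrite /= Efact_esrc_etgt.
    by move/allP/fsubsetP.
  by move/fsubsetP/allP.
apply.
  by apply/allP => f /B_fwd; rewrite /= neq_ltn => ->.
rewrite -map_comp map_inj_in_uniq ?fset_uniq // => f g /B_fwd f_fwd /B_fwd g_fwd /= e.
have [e_src e_tgt] := fset2_sorted_inj f_fwd g_fwd e.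
by rewrite -(Efact_esrc_etgt f) -(Efact_esrc_etgt g) e_src e_tgt.
Qed.

Lemma mem_backward_edges A f : {in A, forall f, erev f \in A} ->
  {in A, forall f, esrc f != etgt f} ->
  (f \in A) && ~~ (esrc f < etgt f)%N = (f \in erev @` forward_edges A).
Proof.
move=> A_sym A_loopfree; apply/andP/imfsetP => /=.
  move=> [fA f_bwd]; exists (erev f); last by rewrite erevK.
  rewrite !inE A_sym //= esrc_erev etgt_erev; have := A_loopfree f fA; lia.
move=> [g]; rewrite !inE => /andP [gA g_fwd] ->.
by rewrite A_sym //= esrc_erev etgt_erev -leqNgt ltnW.
Qed.

Lemma prob_fsubset_sym A : {in A, forall f, erev f \in A} ->
  prob P [set D | A `<=` D] = \prod_(f <- A) sqrt_marginal P f.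
Proof.
move=> A_sym; rewrite /sqrt_marginal.
have [[f fA loop_f] | loopfree] := pselect (exists2 f, f \in A & esrc f = etgt f).
  rewrite (big_fsetD1 f fA) /= prob_loop // sqrtr0 mul0r.
  apply/eqP; rewrite eq_le prob_ge0 // andbT -(prob_loop loop_f).
  by apply: le_prob => // D /fsubsetP; apply.
have A_loopfree : {in A, forall f, esrc f != etgt f}.
  by move=> f fA; apply/eqP => loop_f; apply: loopfree; exists f.
rewrite (big_fsetID _ (fun f => esrc f < etgt f)%N) /=.
rewrite [X in _ * X](eq_fbigl _ (B := erev @` forward_edges A)) => [|f]; last first.
  by rewrite !inE /= mem_backward_edges.
rewrite [X in _ * X]big_imfset /=; last by move=> f g _ _; apply: (can_inj erevK).
rewrite -/(forward_edges A) -big_split /=.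
under eq_bigr do rewrite prob_erev -expr2 sqr_sqrtr ?prob_ge0 //.
rewrite -prob_fsubset_forward => [|f]; last by rewrite inE => /andP[].
apply: eq_prob_supp => D PD; split=> /fsubsetP AD; apply/fsubsetP => f.
  by rewrite inE => /andP [/AD].
move=> fA; have [f_fwd | f_bwd] := boolP (esrc f < etgt f)%N.
  by apply: AD; rewrite inE; apply/andP.
have /imfsetP [g /AD gD ->] : f \in erev @` forward_edges A.
  by rewrite -mem_backward_edges //; apply/andP.
exact: possible_world_erev.
Qed.

Lemma fsubset_sym_part A D : (A `<=` sym_part D) = (A `|` erev @` A `<=` D).
Proof.
apply/fsubsetP/fsubsetP => AD f.
  rewrite inE => /orP [/AD | /imfsetP [g /AD]]; rewrite inE => /andP [] //.
  by move=> _ + ->.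
move=> fA; rewrite inE; apply/andP; split; apply: AD; rewrite inE; apply/orP.
  by left.
by right; apply/imfsetP; exists f.
Qed.

Variable Q : ginstance -> R.
Hypothesis Q_TI : is_TI Q.
Hypothesis Q_marginal :
  forall f, prob Q [set D | f \in D] = sqrt_marginal P f.

Lemma prob_fsubset_sym_part A :
  prob P [set D | A `<=` D] = prob Q [set D | A `<=` sym_part D].
Proof.
pose C := A `|` erev @` A.
have C_sym : {in C, forall f, erev f \in C}.
  move=> f; rewrite !inE => /orP [fA | /imfsetP [g gA ->]]; apply/orP.
    by right; apply/imfsetP; exists f.
  by left; rewrite erevK.
under [in RHS]eq_set do rewrite fsubset_sym_part -/C.
rewrite (prob_fsubset_TI Q_TI).
under eq_bigr do rewrite Q_marginal.
rewrite -prob_fsubset_sym //.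
apply: eq_prob_supp => D PD; split=> /fsubsetP AD; apply/fsubsetP => f.
  rewrite inE => /orP [/AD // | /imfsetP [g /AD gD ->]].
  exact: possible_world_erev.
by move=> fA; apply: AD; rewrite inE fA.
Qed.

Theorem in_CQ_TI_sqrt_marginal : in_CQ_TI P.
Proof.
exists gsig, gar, Q, sym_view; split=> //; split; first exact: sym_view_wf.
move=> D'; rewrite /image_PDB PrE -(prob_set1 P_distr D').
have -> : [set D | view_image sym_view D D'] = [set D | sym_part D = D'].
  by apply/seteqP; split => D /=; rewrite view_image_sym_view => ->.
exact: eq_prob_image_of_fsubset P_distr Q_TI.1 prob_fsubset_sym_part D'.
Qed.

End EdgeIndependentGraph.

(** * The graph D_1 *)

Section InverseSquareTail.
Variable R : realType.

(* prod_(i > K) (1 - i^-2) telescopes to K / (K + 1). *)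
Definition level_tail (K : nat) : R := (K%:R / K.+1%:R) ^+ 2.

Lemma level_tail_ge0 K : 0 <= level_tail K.
Proof. by rewrite exprn_ge0 ?divr_ge0. Qed.

Lemma level_tail_le1 K : level_tail K <= 1.
Proof. by rewrite exprn_ile1 ?divr_ge0 // ler_pdivrMr ?ltr0Sn // mul1r ler_nat. Qed.

Lemma level_tail_step K :
  level_tail K = level_tail K.+1 * (1 - (K.+1%:R ^+ 2)^-1) ^+ 2.
Proof.
rewrite /level_tail -exprMn; congr (_ ^+ 2).
rewrite -[K%:R](addrK 1) natr1 -[K.+2%:R]natr1 -exprVn.
have n_gt0 : 0 < K.+1%:R :> R by rewrite ltr0Sn.
move: (K.+1%:R) n_gt0 => n n_gt0.
have nx : n * n^-1 = 1 by rewrite divff // gt_eqF.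
have ny : (n + 1) * (n + 1)^-1 = 1 by rewrite divff // gt_eqF // ltr_wpDr.
move: (n^-1) (n + 1)^-1 nx ny => x y nx ny.
have nxy : n * x * y = y by rewrite nx mul1r.
have nxxy : n * x * (x * y) = x * y by rewrite nx mul1r.
have xny : x * ((n + 1) * y) = x by rewrite ny mulr1.
nra.
Qed.

Lemma level_tail_approx1 e : 0 < e -> exists K, 1 - e <= level_tail K.
Proof.
move=> e_gt0; exists (Num.Def.truncn (2 / e)); set K := Num.Def.truncn _.
have := truncnS_gt (2 / e); rewrite -/K ltr_pdivrMr // => lt2.
rewrite /level_tail -[K%:R](addrK 1) natr1.
have n_gt0 : 0 < K.+1%:R :> R by rewrite ltr0Sn.
move: (K.+1%:R) n_gt0 lt2 => n n_gt0 lt2.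
have x_gt0 : 0 < n^-1 by rewrite invr_gt0.
have -> : (n - 1) / n = 1 - n^-1 by rewrite mulrBl divff ?gt_eqF // mul1r.
have : 2 * n^-1 < e by rewrite -(ltr_pM2r x_gt0) mulrAC divff ?gt_eqF // mul1r in lt2.
have := sqr_ge0 (n^-1); move: (n^-1) => x x2 lt2x.
nra.
Qed.

End InverseSquareTail.

Arguments level_tail {R}.

Section EdgePairs.
Variables (a b : nat -> nat).
Hypothesis pair_inj : forall i j, (0 < i)%N -> (0 < j)%N -> i <> j ->
  [fset a i; b i] <> [fset a j; b j].

Definition edge_pair i : {fset gfact} := [fset Efact (a i) (b i); Efact (b i) (a i)].

Definition edge_level K : {fset gfact} := \big[fsetU/fset0]_(1 <= i < K.+1) edge_pair i.

Lemma mem_edge_pair i f :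
  f \in edge_pair i = (f == Efact (a i) (b i)) || (f == Efact (b i) (a i)).
Proof. by rewrite !inE. Qed.

Lemma edge_pair_ends i f : f \in edge_pair i -> [fset esrc f; etgt f] = [fset a i; b i].
Proof.
by rewrite mem_edge_pair => /orP [] /eqP ->; rewrite esrc_Efact etgt_Efact // fsetUC.
Qed.

Lemma mem_edge_level K f :
  (f \in edge_level K) = has (fun i => f \in edge_pair i) (index_iota 1 K.+1).
Proof.
apply/bigfcupP/hasP => [[i /andP [iK _] fi] | [i iK fi]]; first by exists i.
by exists i; rewrite ?iK.
Qed.

Lemma edge_level_homo : {homo edge_level : K M / (K <= M)%N >-> K `<=` M}.
Proof.
move=> K M KM; apply/fsubsetP => f; rewrite !mem_edge_level => /hasP [i iK fi].
by apply/hasP; exists i => //; move: iK; rewrite !mem_index_iota; lia.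
Qed.

Lemma edge_pair_disjoint i j : (0 < i)%N -> (0 < j)%N -> i != j ->
  [disjoint edge_pair i & edge_pair j].
Proof.
move=> i_gt0 j_gt0 ij; apply/fdisjointP => f /edge_pair_ends fi.
apply/negP => /edge_pair_ends fj; apply: (pair_inj i_gt0 j_gt0 (elimN eqP ij)).
by rewrite -fi -fj.
Qed.

Lemma edge_level_diff K : edge_level K.+1 `\` edge_level K = edge_pair K.+1.
Proof.
rewrite {1}/edge_level big_nat_recr //= -/(edge_level K) fsetDUl fsetDv fset0U.
apply/fsetDidPl/fdisjointP => f f_pair; rewrite mem_edge_level; apply/hasPn => i.
rewrite mem_index_iota => /andP [i_gt0 iK].
by apply: (fdisjointP (edge_pair_disjoint _ i_gt0 _)) f_pair => //; rewrite gtn_eqF.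
Qed.

End EdgePairs.

Section InverseFourthPowerGraph.
Variables (R : realType) (a b : nat -> nat) (P : ginstance -> R).
Hypothesis ab_neq : forall i, (0 < i)%N -> a i <> b i.
Hypothesis pair_inj : forall i j, (0 < i)%N -> (0 < j)%N -> i <> j ->
  [fset a i; b i] <> [fset a j; b j].
Hypothesis P_edge_indep : edge_indep_unbounded_graph P.
Hypothesis P_pair : forall i, (0 < i)%N ->
  Pr P [set D | Efact (a i) (b i) \in D] = (i%:R ^+ 4)^-1 /\
  Pr P [set D | Efact (b i) (a i) \in D] = (i%:R ^+ 4)^-1.
Hypothesis P_other : forall u v, (forall i, (0 < i)%N ->
  (u, v) <> (a i, b i) /\ (u, v) <> (b i, a i)) -> Pr P [set D | Efact u v \in D] = 0.

Lemma sqrt_marginal_edge_pair i f : (0 < i)%N -> f \in edge_pair a b i ->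
  sqrt_marginal P f = (i%:R ^+ 2)^-1.
Proof.
move=> i_gt0 f_pair; rewrite /sqrt_marginal.
suff -> : prob P [set D | f \in D] = ((i%:R ^+ 2)^-1) ^+ 2.
  by rewrite sqrtr_sqr ger0_norm // invr_ge0 exprn_ge0.
rewrite -exprVn -exprM exprVn -PrE.
move: f_pair; rewrite mem_edge_pair => /orP [] /eqP ->.
  by case: (P_pair i_gt0) => ->.
by case: (P_pair i_gt0) => _ ->.
Qed.

Lemma sqrt_marginal_supp f : sqrt_marginal P f != 0 -> exists K, f \in edge_level a b K.
Proof.
have [[i i_gt0 f_pair] | no_pair] := pselect (exists2 i, (0 < i)%N & f \in edge_pair a b i).
  move=> _; exists i; rewrite mem_edge_level; apply/hasP; exists i => //.
  by rewrite mem_index_iota i_gt0 ltnSn.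
rewrite /sqrt_marginal -(Efact_esrc_etgt f) -PrE P_other ?sqrtr0 ?eqxx // => i i_gt0.
split=> -[src_f tgt_f]; apply: no_pair; exists i => //.
  by rewrite -(Efact_esrc_etgt f) src_f tgt_f mem_edge_pair eqxx.
by rewrite -(Efact_esrc_etgt f) src_f tgt_f mem_edge_pair eqxx orbT.
Qed.

Lemma level_tail_edge_step K : level_tail K = level_tail K.+1 *
  \prod_(f <- edge_level a b K.+1 `\` edge_level a b K) (1 - sqrt_marginal P f).
Proof.
rewrite edge_level_diff // big_fsetU1 ?big_seq_fset1 /=; last first.
  by rewrite inE; apply/eqP => /Efact_inj [ab _]; apply: (ab_neq (ltn0Sn K)).
rewrite !(sqrt_marginal_edge_pair (ltn0Sn K)) ?mem_edge_pair ?eqxx ?orbT // -expr2.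
exact: level_tail_step.
Qed.

Let P_distr : is_distr P := P_edge_indep.1.
Let Q := limit_mass (sqrt_marginal P) (edge_level a b) (@level_tail R).

Lemma limit_edge_marginal f : prob Q [set D | f \in D] = sqrt_marginal P f.
Proof.
exact: (prob_limit_mass_mem (sqrt_marginal_ge0 P) (fun f => sqrt_marginal_le1 f P_distr)
  (@edge_level_homo a b) sqrt_marginal_supp (@level_tail_ge0 R) (@level_tail_le1 R)
  level_tail_edge_step (@level_tail_approx1 R)).
Qed.

Lemma limit_edge_TI : is_TI Q.
Proof.
split.
  exact: (limit_mass_distr (sqrt_marginal_ge0 P) (fun f => sqrt_marginal_le1 f P_distr)
    (@edge_level_homo a b) sqrt_marginal_supp (@level_tail_ge0 R) (@level_tail_le1 R)
    level_tail_edge_step (@level_tail_approx1 R)).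
move=> s s_uniq; rewrite PrE (prob_limit_mass_all (sqrt_marginal_ge0 P)
  (fun f => sqrt_marginal_le1 f P_distr) (@edge_level_homo a b) sqrt_marginal_supp
  (@level_tail_ge0 R) (@level_tail_le1 R) level_tail_edge_step (@level_tail_approx1 R)) //.
by apply: eq_bigr => f _; rewrite PrE limit_edge_marginal.
Qed.

End InverseFourthPowerGraph.

Theorem lemma7p12 (R : realType) (a b : nat -> nat) (P : ginstance -> R) :
  (forall i, (0 < i)%N -> a i <> b i) ->
  (forall i j, (0 < i)%N -> (0 < j)%N -> i <> j ->
     [fset a i; b i] <> [fset a j; b j]) ->
  edge_indep_unbounded_graph P ->
  (forall i, (0 < i)%N ->
     Pr P [set D | Efact (a i) (b i) \in D] = (i%:R ^+ 4)^-1 /\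
     Pr P [set D | Efact (b i) (a i) \in D] = (i%:R ^+ 4)^-1) ->
  (forall u v, (forall i, (0 < i)%N ->
                 (u, v) <> (a i, b i) /\ (u, v) <> (b i, a i)) ->
     Pr P [set D | Efact u v \in D] = 0) ->
  in_CQ_TI P.
Proof.
move=> ab_neq pair_inj P_edge_indep P_pair P_other.
apply: (in_CQ_TI_sqrt_marginal P_edge_indep).
  exact: limit_edge_TI ab_neq pair_inj P_edge_indep P_pair P_other.
exact: limit_edge_marginal ab_neq pair_inj P_edge_indep P_pair P_other.
Qed.
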